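(* For every $j\in\{1,\dots,n\}$, \[ \left|\frac{\widehat f_{e_n}(Y_j)-\widehat f(Y_j)}{f_{e_n}(Y_j)}\right|\le2\left[\mathbf 1_{\{f(Y_j)<2e_n\}}+\frac{\big(\sup_{y\in\mathbb R}|\widehat f(y)-f(y)|\big)^2}{e_n^2}\right]. \]
   Context: $Y$ is a real random variable with density $f$, and $Y_1,\dots,Y_n$ are i.i.d. copies of $Y$. For a kernel $K:\mathbb R\to\mathbb R_+$ and bandwidth $h>0$, $\widehat f(y)=\frac1{nh}\sum_{i=1}^nK(\frac{Y_i-y}{h})$. $e_n>0$; $f_{e_n}=\max(f,e_n)$ and $\widehat f_{e_n}=\max(e_n,\widehat f)$. *)

From HB Require Import structures.
From mathcomp Require Import all_boot all_order all_algebra.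
From mathcomp Require Import all_classical all_reals all_analysis.
Set Implicit Arguments. Unset Strict Implicit. Unset Printing Implicit Defensive.
Import Order.TTheory GRing.Theory Num.Theory.
Local Open Scope classical_set_scope.
Local Open Scope ring_scope.

Definition kde (R : realType) (n : nat) (K : R -> R) (h : R)
  (Ys : 'I_n -> R) (y : R) : R :=
  (n%:R * h)^-1 * \sum_(i < n) K ((Ys i - y) / h).

Definition trunc_below (R : realType) (e : R) (g : R -> R) (y : R) : R :=
  Num.max e (g y).

Definition has_density (R : realType) d (T : measurableType d)
  (P : probability T R) (X : {RV P >-> R}) (f : R -> R) : Prop :=
  measurable_fun setT f /\ (forall x, 0 <= f x) /\
  forall A : set R, measurable A ->
    distribution P X A = (\int[lebesgue_measure]_(x in A) (f x)%:E)%E.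

Definition mutually_independent (R : realType) d (T : measurableType d)
  (P : probability T R) (n : nat) (X : 'I_n -> {RV P >-> R}) : Prop :=
  forall (J : {set 'I_n}) (B : 'I_n -> set R),
    (forall j, measurable (B j)) ->
    P (\bigcap_(j in [set j | j \in J]) (X j @^-1` B j)) =
    (\prod_(j in J) P (X j @^-1` B j))%E.

From HB Require Import structures.
From mathcomp Require Import all_boot all_order all_algebra.
From mathcomp Require Import all_classical all_reals all_analysis.
From mathcomp Require Import ring lra.
Set Implicit Arguments. Unset Strict Implicit. Unset Printing Implicit Defensive.
Import Order.TTheory GRing.Theory Num.Theory.
Local Open Scope classical_set_scope.
Local Open Scope ring_scope.

(* The inequality is deterministic. Truncating a nonnegative [a] at level [e]
   moves it by at most [e], and not at all once [a >= e]. If [f(y) < 2e] the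
   ratio is at most [e / max(e, f(y)) <= 1]. Otherwise the truncation is only
   active when [a < e <= f(y)/2], so the estimation error [s] exceeds [f(y)/2],
   and then [e / f(y) <= 2 s^2 / e^2] because [f(y) >= 2e]. *)

Lemma kde_ge0 (R : realType) (n : nat) (K : R -> R) (h : R) (Ys : 'I_n -> R)
    (y : R) :
  (forall u, 0 <= K u) -> 0 <= h -> 0 <= kde K h Ys y.
Proof.
move=> K_ge0 h_ge0; apply: mulr_ge0; last exact: sumr_ge0.
by rewrite invr_ge0 mulr_ge0.
Qed.

Lemma trunc_gap_ge0 (R : realFieldType) (e a : R) : 0 <= Num.max e a - a.
Proof. by rewrite subr_ge0 le_max lexx orbT. Qed.

Lemma trunc_gap_le (R : realFieldType) (e a : R) :
  0 < e -> 0 <= a -> Num.max e a - a <= e.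
Proof.
by move=> e_gt0 a_ge0; case: (leP e a) => _; [rewrite subrr ltW | lra].
Qed.

Lemma trunc_ratio_le_small (R : realFieldType) (e a F : R) :
  0 < e -> 0 <= a -> (Num.max e a - a) / Num.max e F <= 1.
Proof.
move=> e_gt0 a_ge0; have eF : e <= Num.max e F by rewrite le_max lexx.
rewrite ler_pdivrMr ?mul1r; last exact: lt_le_trans eF.
exact: le_trans (trunc_gap_le e_gt0 a_ge0) eF.
Qed.

Lemma trunc_ratio_le_large (R : realFieldType) (e a F s : R) :
  0 < e -> 0 <= a -> 2 * e <= F -> `|a - F| <= s ->
  (Num.max e a - a) / Num.max e F <= 2 * (s ^+ 2 / e ^+ 2).
Proof.
move=> e_gt0 a_ge0 eF aFs; have F_gt0 : 0 < F by lra.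
have -> : Num.max e F = F by apply/max_idPr; lra.
have bound_ge0 : 0 <= 2 * (s ^+ 2 / e ^+ 2).
  by rewrite mulr_ge0 ?divr_ge0 ?sqr_ge0.
case: (leP e a) => [ea | ae]; first by rewrite subrr mul0r.
have Fs : F / 2 <= s by apply: le_trans aFs; rewrite distrC ger0_norm; lra.
have F2s2 : F * F <= 4 * (s * s) by nra.
rewrite ler_pdivrMr // -(@ler_pM2r _ (e ^+ 2)) ?exprn_gt0 //.
have -> : 2 * (s ^+ 2 / e ^+ 2) * F * e ^+ 2 = 2 * (s * s) * F.
  by field; rewrite gt_eqF.
have F2 : 4 * (e * e) <= F * F by nra.
have F3 : 8 * (e * e * e) <= F * F * F by nra.
have F3s : F * F * F <= 4 * (s * s) * F by rewrite ler_pM2r.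
have ae2 : 0 <= a * (e * e) by rewrite mulr_ge0 // sqr_ge0.
rewrite expr2; nra.
Qed.

Lemma trunc_ratio_le (R : realFieldType) (e a F s : R) :
  0 < e -> 0 <= a -> `|a - F| <= s ->
  `|(Num.max e a - a) / Num.max e F| <= 2 * ((F < 2 * e)%R%:R + s ^+ 2 / e ^+ 2).
Proof.
move=> e_gt0 a_ge0 aFs.
rewrite ger0_norm; last first.
  by rewrite divr_ge0 ?trunc_gap_ge0 // le_max ltW.
case: (ltP F (2 * e)) => [_ | eF] /=; last by rewrite add0r trunc_ratio_le_large.
have := trunc_ratio_le_small F e_gt0 a_ge0.
have : 0 <= s ^+ 2 / e ^+ 2 by rewrite divr_ge0 ?sqr_ge0.
lra.
Qed.

Theorem lemma2 (R : realType) (d : measure_display) (T : measurableType d)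
  (P : probability T R) (n : nat) (Y : 'I_n -> {RV P >-> R})
  (f : R -> R) (K : R -> R) (h e : R)
  (hf : forall i, has_density (Y i) f)
  (hind : mutually_independent Y)
  (hK : forall u, 0 <= K u) (hh : 0 < h) (he : 0 < e) :
  forall (omega : T) (j : 'I_n),
    let fhat := kde K h (fun i => Y i omega) in
    let y := Y j omega in
    ((`| (trunc_below e fhat y - fhat y) / trunc_below e f y |)%:E <=
     2%:E * ((\1_[set x | (f x < 2 * e)%R] y)%:E +
       ereal_sup (range (fun x => (`| fhat x - f x |)%:E)) ^+ 2 * (e ^- 2)%:E))%E.
Proof.
move=> omega j; set fhat := kde K h _; set y := Y j omega; cbv zeta.
have fhat_ge0 : 0 <= fhat y by apply: kde_ge0 => //; exact: ltW.
have err_le_sup : ((`|fhat y - f y|)%:E <=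
    ereal_sup (range (fun x => (`|fhat x - f x|)%:E)))%E.
  by apply: ereal_sup_ubound; exists y.
have small_f : (y \in [set x | f x < 2 * e]) = (f y < 2 * e).
  by apply/idP/idP => [/set_mem | /mem_set].
rewrite indicE small_f /trunc_below.
case: ereal_sup err_le_sup => [s | _ | //].
- rewrite lee_fin => err_le_s.
  rewrite -EFin_expe -!EFinM lee_fin.
  exact: trunc_ratio_le he fhat_ge0 err_le_s.
- by rewrite /= mulyr gtr0_sg ?invr_gt0 ?exprn_gt0 // mul1e addey // mulry
    gtr0_sg // mul1e leey.
Qed.
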